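(* Let $\Gamma$ be an elliptic graph with NN-elliptic sequence $\{B_j\}_{j=-1}^m$ and cycles $C_j$, and let $-1\le j\le m-1$. If $v\in\mathcal V(\Gamma)\setminus\mathcal V(B_{j+1})$ satisfies $(E_{B_{j+1}},E_v)=1$, where $E_{B_{j+1}}=\sum_{w\in\mathcal V(B_{j+1})}E_w$, then $(C_j,E_v)=e_v+1$.
   Context: Let $\Gamma$ be a finite connected tree with vertex set $\mathcal V$, each vertex $v$ decorated by an integer $e_v$ (genera zero). $L=\mathbb Z\langle E_v\rangle$ with form $(E_v,E_v)=e_v$, $(E_v,E_w)=1$ for adjacent $v\ne w$, $0$ otherwise, assumed negative definite; $L'$ the dual lattice, $[l']$ the class in $L'/L$; $\ge$ coordinatewise, $l>0$ if $l\ge0,l\ne0$; $|l'|$ the support. $Z_K$ with $(Z_K,E_v)=e_v+2$; $\chi(l')=-(l',l'-Z_K)/2$. $\mathcal S'=\{l':(l',E_v)\le0\ \forall v\}$, $s_h=\min\{l'\in\mathcal S':[l']=h\}$; $Z_{min}(B)$ the minimal nonzero element of $\mathcal S'(B)\cap L(B)$ for a connected full subgraph $B$. Elliptic graph: $e_v\le-2$ for all $v$, $\min_{l\in L,l>0}\chi(l)=0$. NN-elliptic sequence: $B_{-1}=\Gamma$, $Z_{B_{-1}}=s_{[Z_K]}$, $B_0=|Z_K-s_{[Z_K]}|$; for $j\ge0$, $Z_{B_j}=Z_{min}(B_j)$, and if $Z_K-\sum_{i=-1}^jZ_{B_i}\ne0$ then $B_{j+1}=|Z_K-\sum_{i=-1}^jZ_{B_i}|$;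 $m$ is the index with $Z_K=\sum_{i=-1}^mZ_{B_i}$; $C_j=\sum_{i=-1}^jZ_{B_i}$. *)

From mathcomp Require Import all_boot all_order all_algebra.
Set Implicit Arguments. Unset Strict Implicit. Unset Printing Implicit Defensive.
Import Order.TTheory GRing.Theory Num.Theory.
Local Open Scope ring_scope.

(* Elements of L' ⊗ Q are written in the basis {E_v}: vectors 'I_n -> rat. *)
Definition vec (n : nat) := 'I_n -> rat.

Definition is_intq (x : rat) : Prop := exists z : int, x = z%:~R.
Definition in_L n (l : vec n) : Prop := forall v, is_intq (l v).

Definition vadd n (x y : vec n) : vec n := fun v => x v + y v.
Definition vsub n (x y : vec n) : vec n := fun v => x v - y v.
Definition vzero n : vec n := fun _ => 0.
Definition vsum n (k : nat) (Z : nat -> vec n) : vec n :=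
  fun v => \sum_(i < k) Z i v.
Definition E n (v : 'I_n) : vec n := fun w => (w == v)%:R.
Definition EB n (B : {set 'I_n}) : vec n := fun w => (w \in B)%:R.

Definition Ment n (adj : rel 'I_n) (e : 'I_n -> int) (v w : 'I_n) : rat :=
  if v == w then (e v)%:~R else if adj v w then 1 else 0.
Definition iform n (adj : rel 'I_n) (e : 'I_n -> int) (x y : vec n) : rat :=
  \sum_(v < n) \sum_(w < n) x v * y w * Ment adj e v w.

Definition vle n (x y : vec n) : Prop := forall v, x v <= y v.
Definition supp n (x : vec n) : {set 'I_n} := [set v | x v != 0].

Definition is_tree n (adj : rel 'I_n) : Prop :=
  (0 < n)%N /\ symmetric adj /\ irreflexive adj /\
  (forall u v, connect adj u v) /\
  #|[set p : 'I_n * 'I_n | adj p.1 p.2]| = (2 * n.-1)%N.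

Definition neg_def n (adj : rel 'I_n) (e : 'I_n -> int) : Prop :=
  forall l : vec n, in_L l -> l <> (@vzero n) -> iform adj e l l < 0.

Definition in_Ldual n (adj : rel 'I_n) (e : 'I_n -> int) (l : vec n) : Prop :=
  forall v, is_intq (iform adj e l (E v)).
Definition in_Sdual n (adj : rel 'I_n) (e : 'I_n -> int) (l : vec n) : Prop :=
  in_Ldual adj e l /\ forall v, iform adj e l (E v) <= 0.
Definition same_class n (x y : vec n) : Prop := in_L (vsub x y).

Definition IsMin n (P : vec n -> Prop) (x : vec n) : Prop :=
  P x /\ forall y, P y -> vle x y.

Definition is_s n (adj : rel 'I_n) (e : 'I_n -> int) (l' s : vec n) : Prop :=
  IsMin (fun x => in_Sdual adj e x /\ same_class x l') s.

Definition is_Zmin n (adj : rel 'I_n) (e : 'I_n -> int) (B : {set 'I_n}) (z : vec n) : Prop :=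
  IsMin (fun l => [/\ in_L l, l <> (@vzero n), supp l \subset B &
                     forall v, v \in B -> iform adj e l (E v) <= 0]) z.

Definition is_ZK n (adj : rel 'I_n) (e : 'I_n -> int) (ZK : vec n) : Prop :=
  forall v, iform adj e ZK (E v) = (e v + 2)%:~R.

Definition chi n (adj : rel 'I_n) (e : 'I_n -> int) (ZK l : vec n) : rat := - iform adj e l (vsub l ZK) / 2.

Definition elliptic n (adj : rel 'I_n) (e : 'I_n -> int) (ZK : vec n) : Prop :=
  (forall v, e v <= -2) /\
  (exists l : vec n, [/\ in_L l, vle ((@vzero n)) l, l <> (@vzero n) & chi adj e ZK l = 0]) /\
  (forall l : vec n, in_L l -> vle ((@vzero n)) l -> l <> (@vzero n) -> 0 <= chi adj e ZK l).

(* NN-elliptic sequence with shifted indices: B k = B_{k-1}, Z k = Z_{B_{k-1}},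
   k = 0..M where M = m+1.  C_{k-1} = vsum (k) Z. *)
Definition NN_seq n (adj : rel 'I_n) (e : 'I_n -> int) (ZK : vec n) (M : nat) (B : nat -> {set 'I_n})
    (Z : nat -> vec n) : Prop :=
  [/\ B 0%N = setT,
      is_s adj e ZK (Z 0%N),
      (forall k, (1 <= k <= M)%N -> is_Zmin adj e (B k) (Z k)),
      (forall k, (k < M)%N -> vsum k.+1 Z <> ZK /\ B k.+1 = supp (vsub ZK (vsum k.+1 Z)))
    & vsum M.+1 Z = ZK].

(* Let X = Z_K - C_j, the part of Z_K not yet used up by the sequence: it is an
   effective integral cycle with support B_{j+1}.  Peeling off the Z_{B_i} one
   at a time never increases chi, because chi(Z_{B_i}) >= 0 and Z_{B_i} pairs
   nonpositively with the remainder; and chi(Z_K - s_[Z_K]) = chi(s_[Z_K]) <= 0,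
   since on an elliptic graph s_h minimizes chi on its class (Laufer's algorithm
   below s_h, submodularity of chi in general).  Hence chi(X) <= 0.  Ellipticity
   gives chi(X + E_v) >= 0, i.e. (X, E_v) <= 1, while X >= E_{B_{j+1}} gives
   (X, E_v) >= 1.  So (C_j, E_v) = (Z_K, E_v) - 1 = e_v + 1. *)

From Pilot Require Import Defs.
From mathcomp Require Import all_boot all_order all_algebra.
From mathcomp Require Import ring lra zify.
From Stdlib Require Import FunctionalExtensionality.
Set Implicit Arguments. Unset Strict Implicit. Unset Printing Implicit Defensive.
Import Order.TTheory GRing.Theory Num.Theory.
Local Open Scope ring_scope.

Lemma is_intqP (x : rat) : is_intq x <-> x \is a Num.int.
Proof. by split => [[z ->]|/intrP [z ->]]; [apply: intr_int | exists z]. Qed.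

Lemma int_ge1 (x : rat) : x \is a Num.int -> 0 < x -> 1 <= x.
Proof. by move=> xi x0; have := norm_intr_ge1 xi (lt0r_neq0 x0); rewrite gtr0_norm. Qed.

Section Cycles.
Variable n : nat.
Implicit Types x y l d : vec n.

Lemma in_LD x y : in_L x -> in_L y -> in_L (vadd x y).
Proof. by move=> Lx Ly u; apply/is_intqP; rewrite rpredD //; apply/is_intqP. Qed.

Lemma in_LB x y : in_L x -> in_L y -> in_L (vsub x y).
Proof. by move=> Lx Ly u; apply/is_intqP; rewrite rpredB //; apply/is_intqP. Qed.

Lemma in_LE (v : 'I_n) : in_L (E v).
Proof. by move=> u; apply/is_intqP; rewrite natr_int. Qed.

Lemma same_class_sub x y l : same_class x l -> same_class y l -> in_L (vsub x y).
Proof.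
move=> xl yl; have -> : vsub x y = vsub (vsub x l) (vsub y l).
  by apply: functional_extensionality => u; rewrite /vsub; ring.
exact: in_LB.
Qed.

Lemma same_class_addL x d l : same_class x l -> in_L d -> same_class (vadd x d) l.
Proof.
move=> xl Ld; rewrite /same_class; have -> : vsub (vadd x d) l = vadd (vsub x l) d.
  by apply: functional_extensionality => u; rewrite /vadd /vsub; ring.
exact: in_LD.
Qed.

Lemma vsumS (Z : nat -> vec n) j : vsum j.+1 Z = vadd (vsum j Z) (Z j).
Proof. by apply: functional_extensionality => u; rewrite /vsum /vadd big_ord_recr. Qed.

Lemma supp_le x y : vle (@vzero n) x -> vle x y -> supp x \subset supp y.
Proof.
move=> x0 xy; apply/subsetP => u; rewrite !inE => xu.
by rewrite gt_eqF // (lt_le_trans _ (xy u)) // lt_neqAle eq_sym xu x0.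
Qed.

Definition vmin x y : vec n := fun u => Num.min (x u) (y u).
Definition vmax x y : vec n := fun u => Num.max (x u) (y u).

Lemma same_class_vmin x y l :
  same_class x l -> same_class y l -> same_class (vmin x y) l.
Proof.
by move=> xl yl u; rewrite /vsub /vmin minElt; case: ifP => _; [exact: xl | exact: yl].
Qed.

Lemma same_class_vmax x y l :
  same_class x l -> same_class y l -> same_class (vmax x y) l.
Proof.
by move=> xl yl u; rewrite /vsub /vmax maxElt; case: ifP => _; [exact: yl | exact: xl].
Qed.

End Cycles.

Section IntersectionForm.
Variables (n : nat) (adj : rel 'I_n) (e : 'I_n -> int).
Hypothesis adjC : symmetric adj.
Implicit Types x y z p q : vec n.
Local Notation "( x , y )" := (iform adj e x y).

Lemma MentC u w : Ment adj e u w = Ment adj e w u.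
Proof. by rewrite /Ment eq_sym adjC; case: eqP => // ->. Qed.

Lemma Ment_ge0 u w : u != w -> 0 <= Ment adj e u w.
Proof. by rewrite /Ment => /negbTE ->; case: adj. Qed.

Lemma Ment_int u w : Ment adj e u w \is a Num.int.
Proof. by rewrite /Ment; case: eqP => _; [exact: intr_int | case: adj]. Qed.

Lemma iformC x y : (x, y) = (y, x).
Proof.
rewrite /iform exchange_big; apply: eq_bigr => u _; apply: eq_bigr => w _.
by rewrite MentC; ring.
Qed.

Lemma iformDl x y z : (vadd x y, z) = (x, z) + (y, z).
Proof.
rewrite /iform -big_split /=; apply: eq_bigr => u _.
by rewrite -big_split /=; apply: eq_bigr => w _; rewrite /vadd; ring.
Qed.

Lemma iformBl x y z : (vsub x y, z) = (x, z) - (y, z).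
Proof.
rewrite /iform -sumrB; apply: eq_bigr => u _.
by rewrite -sumrB; apply: eq_bigr => w _; rewrite /vsub; ring.
Qed.

Lemma iformDr x y z : (z, vadd x y) = (z, x) + (z, y).
Proof. by rewrite iformC iformDl !(iformC z). Qed.

Lemma iformBr x y z : (z, vsub x y) = (z, x) - (z, y).
Proof. by rewrite iformC iformBl !(iformC z). Qed.

Lemma iformEr x w : (x, E w) = \sum_u x u * Ment adj e u w.
Proof.
apply: eq_bigr => u _; rewrite (bigD1 w) //= big1 => [|v /negbTE vw].
  by rewrite /E eqxx addr0 mulr1.
by rewrite /E vw mulr0 mul0r.
Qed.

Lemma iform_sumEr x y : (x, y) = \sum_w y w * (x, E w).
Proof.
under [RHS]eq_bigr => w _ do rewrite iformEr mulr_sumr.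
by rewrite /iform exchange_big; apply: eq_bigr => u _; apply: eq_bigr => w _; ring.
Qed.

Lemma iformE_int x w : in_L x -> (x, E w) \is a Num.int.
Proof.
move=> Lx; rewrite iformEr; apply: rpred_sum => u _.
by rewrite rpredM ?Ment_int //; apply/is_intqP.
Qed.

Lemma iform_le0 x y (B : {set 'I_n}) : vle (@vzero n) y -> supp y \subset B ->
  (forall w, w \in B -> (x, E w) <= 0) -> (x, y) <= 0.
Proof.
move=> y0 yB xB; rewrite iform_sumEr -oppr_ge0 -sumrN; apply: sumr_ge0 => w _.
have [->|yw] := eqVneq (y w) 0; first by rewrite mul0r oppr0.
rewrite oppr_ge0; apply: mulr_ge0_le0; first exact: y0.
by apply: xB; apply: (subsetP yB); rewrite inE.
Qed.

Lemma iform_ge0_disjoint p q : vle (@vzero n) p -> vle (@vzero n) q ->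
  (forall u, p u * q u = 0) -> 0 <= (p, q).
Proof.
move=> p0 q0 pq; apply: sumr_ge0 => u _; apply: sumr_ge0 => w _.
have [<-|uw] := eqVneq u w; first by rewrite pq mul0r.
apply: mulr_ge0; last exact: Ment_ge0.
by apply: mulr_ge0; [exact: p0 | exact: q0].
Qed.

(* The negative part [N] of [z] satisfies [(N, N) = (P, N) - (z, N) >= 0],
   where [P] is the positive part; negative definiteness forces [N = 0]. *)
Lemma antinef_ge0 z (B : {set 'I_n}) : neg_def adj e -> in_L z -> supp z \subset B ->
  (forall u, u \in B -> (z, E u) <= 0) -> vle (@vzero n) z.
Proof.
move=> nd Lz zB za.
pose N : vec n := fun u => if z u < 0 then - z u else 0.
pose P : vec n := fun u => if z u < 0 then 0 else z u.
have N0 : vle (@vzero n) N.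
  by move=> u; rewrite /N /vzero; case: ifP => // /ltW; rewrite oppr_ge0.
have P0 : vle (@vzero n) P.
  by move=> u; rewrite /P /vzero; case: ifP => // /negbT; rewrite -leNgt.
have zPN : z = vsub P N.
  by apply: functional_extensionality => u; rewrite /vsub /P /N; case: ifP => _; ring.
have NB : supp N \subset B.
  apply: subset_trans zB; apply/subsetP => u; rewrite !inE /N.
  by case: ifP => [/lt_eqF -> | _]; rewrite ?eqxx.
have zN : (z, N) <= 0 by apply: iform_le0 NB za.
have PN : 0 <= (P, N).
  by apply: iform_ge0_disjoint => // u; rewrite /P /N; case: ifP; rewrite ?mul0r ?mulr0.
have NN : 0 <= (N, N) by move: zN; rewrite {1}zPN iformBl; lra.
have LN : in_L N.
  move=> u; apply/is_intqP; rewrite /N; case: ifP => _; last exact: int_num0.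
  by rewrite rpredN; apply/is_intqP.
have [/forallP N_eq0 | /forallPn [u /negP Nu]] := boolP [forall u, N u == 0]; last first.
  have : N <> @vzero n by move=> N_eq0; apply: Nu; rewrite N_eq0.
  by move/(nd _ LN); lra.
move=> u; have := N_eq0 u; rewrite /N /vzero; case: ifP => [/lt_eqF zu|/negbT].
  by rewrite oppr_eq0 zu.
by rewrite -leNgt.
Qed.

Variable ZK : vec n.
Local Notation chi := (chi adj e ZK).

Lemma chiD x y : chi (vadd x y) = chi x + chi y - (x, y).
Proof. rewrite /Defs.chi iformDl !iformBr !iformDr (iformC y x); lra. Qed.

Lemma chi_ZKB x : chi (vsub ZK x) = chi x.
Proof. rewrite /Defs.chi !iformBl !iformBr (iformC ZK x); lra. Qed.

Lemma chi_E v : is_ZK adj e ZK -> chi (E v) = 1.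
Proof.
move=> hZK; rewrite /Defs.chi iformBr (iformC (E v) ZK) hZK iformEr.
rewrite (bigD1 v) //= big1 => [|u /negbTE uv]; last by rewrite /E uv mul0r.
by rewrite /E /Ment !eqxx mul1r rmorphD /=; lra.
Qed.

(* Writing [x = m + p] and [y = m + q] with [m = vmin x y], the defect is
   [(p, q) >= 0] because [p] and [q] have disjoint supports. *)
Lemma chi_vmax_vmin x y : chi (vmax x y) + chi (vmin x y) <= chi x + chi y.
Proof.
pose m := vmin x y; pose p := vsub x m; pose q := vsub y m.
have p0 : vle (@vzero n) p by move=> u; rewrite /p /vsub subr_ge0 /m /vmin ge_min lexx.
have q0 : vle (@vzero n) q.
  by move=> u; rewrite /q /vsub subr_ge0 /m /vmin ge_min lexx orbT.
have pq u : p u * q u = 0.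
  by rewrite /p /q /vsub /m /vmin minElt; case: ifP => _; rewrite subrr ?mul0r ?mulr0.
have emax : vmax x y = vadd (vadd m p) q.
  apply: functional_extensionality => u; rewrite /vadd /p /q /vsub /vmax /m /vmin.
  by rewrite minElt maxElt; case: ifP => _; ring.
have ex : vadd m p = x.
  by apply: functional_extensionality => u; rewrite /vadd /p /vsub; ring.
have ey : vadd m q = y.
  by apply: functional_extensionality => u; rewrite /vadd /q /vsub; ring.
rewrite emax -/m -{1}ex -{1}ey !chiD iformDl.
have := iform_ge0_disjoint p0 q0 pq; lra.
Qed.

Hypothesis chi_eff_ge0 : forall l, in_L l -> vle (@vzero n) l -> 0 <= chi l.

Lemma chi_le_add_eff x d : (forall u, (x, E u) <= 0) -> in_L d -> vle (@vzero n) d ->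
  chi x <= chi (vadd x d).
Proof.
move=> xnef Ld d0; rewrite chiD.
have := chi_eff_ge0 Ld d0; have := @iform_le0 x d setT d0 (subsetT _) (fun u _ => xnef u).
lra.
Qed.

End IntersectionForm.

Section LauferSequence.
Variables (n : nat) (adj : rel 'I_n) (e : 'I_n -> int) (ZK l' s : vec n).
Hypotheses (adjC : symmetric adj) (hZK : is_ZK adj e ZK) (hs : is_s adj e l' s).
Implicit Types x y : vec n.
Local Notation "( x , y )" := (iform adj e x y).
Local Notation chi := (chi adj e ZK).

Lemma s_class : same_class s l'.
Proof. by case: hs => [[]]. Qed.

Lemma iformE_int_class y v : same_class y l' -> (y, E v) \is a Num.int.
Proof.
move=> yl; have -> : y = vadd s (vsub y s).
  by apply: functional_extensionality => u; rewrite /vadd /vsub; ring.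
rewrite iformDl rpredD //; last exact/iformE_int/(same_class_sub yl s_class).
by case: hs => [[[hL _] _] _]; apply/is_intqP; exact: hL.
Qed.

(* Laufer's step: a cycle of the class strictly below [s] is not in [S'], and
   adding [E_v] where [(y, E_v) >= 1] does not raise [chi]. *)
Lemma laufer_step y : vle y s -> same_class y l' -> y <> s ->
  exists2 v, y v < s v & chi (vadd y (E v)) <= chi y.
Proof.
move=> ys yl neq_ys.
have [/existsP [v yv] | /existsPn ynef] := boolP [exists v, 0 < (y, E v)]; last first.
  suff sy : vle s y.
    by case: neq_ys; apply: functional_extensionality => u; apply/eqP; rewrite eq_le ys sy.
  case: hs => _; apply; split=> //; split=> [u | u]; first exact/is_intqP/iformE_int_class.
  by rewrite leNgt; exact: ynef.
have yv1 : 1 <= (y, E v) by apply: int_ge1 => //; exact: iformE_int_class.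
exists v; last by rewrite chiD // chi_E //; lra.
rewrite lt_neqAle ys andbT; apply/eqP => yv_sv.
have : 0 <= (vsub s y, E v).
  rewrite iformEr; apply: sumr_ge0 => u _.
  have [->|uv] := eqVneq u v; first by rewrite /vsub yv_sv subrr mul0r.
  by rewrite mulr_ge0 ?Ment_ge0 // /vsub subr_ge0.
by rewrite iformBl; case: hs => [[[_ hS] _] _]; have := hS v; lra.
Qed.

Lemma chi_s_le_below y : vle y s -> same_class y l' -> chi s <= chi y.
Proof.
suff H N y' : \sum_u (s u - y' u) < N%:R -> vle y' s -> same_class y' l' ->
    chi s <= chi y'.
  move=> ys; apply: (H (Num.bound (\sum_u (s u - y u)))) => //; apply: archi_boundP.
  by apply: sumr_ge0 => u _; rewrite subr_ge0.
elim: N y' => [|N IH] y' hsum ys yl.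
  have : 0 <= \sum_u (s u - y' u) by apply: sumr_ge0 => u _; rewrite subr_ge0.
  by move: hsum; rewrite ltNge => /negP.
have [/forallP eq_ys | /forallPn [w /eqP neq_w]] := boolP [forall u, y' u == s u].
  by have -> : y' = s by apply: functional_extensionality => u; apply/eqP.
have [v ltv chi_le] : exists2 v, y' v < s v & chi (vadd y' (E v)) <= chi y'.
  by apply: laufer_step => // eq_ys; apply: neq_w; rewrite eq_ys.
apply: le_trans chi_le; apply: IH.
- have -> : \sum_u (s u - vadd y' (E v) u) = \sum_u (s u - y' u) - \sum_u E v u.
    by rewrite -sumrB; apply: eq_bigr => u _; rewrite /vadd; ring.
  have -> : \sum_u E v u = 1.
    by rewrite (bigD1 v) //= big1 => [|u /negbTE uv]; rewrite /E ?uv ?eqxx ?addr0.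
  by move: hsum; rewrite -addn1 natrD; lra.
- move=> u; rewrite /vadd /E; have [->|_] := eqVneq u v; last first.
    by rewrite addr0; exact: ys.
  suff : 1 <= s v - y' v by rewrite /= mulr1n; lra.
  by apply: int_ge1; [exact/is_intqP/(same_class_sub s_class yl) | rewrite subr_gt0].
- exact/same_class_addL/in_LE.
Qed.

Hypothesis chi_eff_ge0 : forall l, in_L l -> vle (@vzero n) l -> 0 <= chi l.

(* [s] lies below [vmax s y] and above [vmin s y], both in its class;
   submodularity of [chi] then compares [s] with [y]. *)
Lemma chi_s_min y : same_class y l' -> chi s <= chi y.
Proof.
move=> yl.
have le_min : chi s <= chi (vmin s y).
  apply: chi_s_le_below; last exact: same_class_vmin s_class yl.
  by move=> u; rewrite /vmin ge_min lexx.
have le_max : chi s <= chi (vmax s y).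
  have -> : vmax s y = vadd s (vsub (vmax s y) s).
    by apply: functional_extensionality => u; rewrite /vadd /vsub; ring.
  apply: chi_le_add_eff => //.
  - by move=> u; case: hs => [[[_ hS] _] _]; exact: hS.
  - exact: same_class_sub (same_class_vmax s_class yl) s_class.
  - by move=> u; rewrite /vzero /vsub subr_ge0 /vmax le_max lexx.
have := chi_vmax_vmin e adjC ZK s y; lra.
Qed.

End LauferSequence.

Lemma elliptic_chi_ge0 n (adj : rel 'I_n) e ZK l : elliptic adj e ZK ->
  in_L l -> vle (@vzero n) l -> 0 <= chi adj e ZK l.
Proof.
move=> [_ [_ hell]] Ll l0.
have [/forallP l_eq0 | /forallPn [u /eqP lu]] := boolP [forall u, l u == 0].
  have -> : l = @vzero n by apply: functional_extensionality => u; apply/eqP.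
  by rewrite /chi /iform big1 // => u _; rewrite big1 // => w _; rewrite /vzero !mul0r.
by apply: hell => // l_eq0; apply: lu; rewrite l_eq0.
Qed.

Lemma chi_s_ZK_le0 n (adj : rel 'I_n) e ZK s : symmetric adj -> is_ZK adj e ZK ->
  elliptic adj e ZK -> is_s adj e ZK s -> chi adj e ZK s <= 0.
Proof.
move=> adjC hZK hell hs; have [_ [[l0 [Ll0 _ _ chil0]] _]] := hell.
rewrite -chil0 -(chi_ZKB e adjC ZK l0).
apply: (chi_s_min adjC hZK hs); first by move=> l; exact: elliptic_chi_ge0.
rewrite /same_class; have -> : vsub (vsub ZK l0) ZK = vsub (@vzero n) l0.
  by apply: functional_extensionality => u; rewrite /vsub /vzero; ring.
by apply: in_LB => // u; exists 0.
Qed.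

Lemma iformE_off_supp n (adj : rel 'I_n) e ZK X v : symmetric adj ->
  is_ZK adj e ZK -> elliptic adj e ZK ->
  in_L X -> vle (@vzero n) X -> chi adj e ZK X <= 0 -> v \notin supp X ->
  iform adj e (EB (supp X)) (E v) = 1 -> iform adj e X (E v) = 1.
Proof.
move=> adjC hZK hell LX X0 chiX vX hEB.
have Xv0 : X v = 0 by apply/eqP; move: vX; rewrite inE negbK.
apply/eqP; rewrite eq_le; apply/andP; split.
  have : 0 <= chi adj e ZK (vadd X (E v)).
    apply: elliptic_chi_ge0 => //; first exact/in_LD/in_LE.
    by move=> u; rewrite /vzero /vadd /E addr_ge0 ?ler0n //; exact: X0.
  by rewrite chiD // chi_E //; lra.
rewrite -hEB !iformEr // ler_sum // => u _.
have [->|uv] := eqVneq u v; first by rewrite Xv0 /EB (negbTE vX) !mul0r.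
apply: ler_wpM2r; first exact: Ment_ge0.
rewrite /EB inE; have [Xu | _] := boolP (X u != 0); last exact: X0.
by apply: int_ge1; [exact/is_intqP | rewrite lt0r Xu; exact: X0].
Qed.

Section NNEllipticSequence.
Variables (n : nat) (adj : rel 'I_n) (e : 'I_n -> int) (ZK : vec n).
Variables (M : nat) (B : nat -> {set 'I_n}) (Z : nat -> vec n).
Hypotheses (adjC : symmetric adj) (nd : neg_def adj e) (hZK : is_ZK adj e ZK)
  (hell : elliptic adj e ZK) (hNN : NN_seq adj e ZK M B Z).
Local Notation chi := (chi adj e ZK).

Definition tail j : vec n := vsub ZK (vsum j Z).

Lemma tailS j : tail j.+1 = vsub (tail j) (Z j).
Proof.
by apply: functional_extensionality => u; rewrite /tail vsumS /vsub /vadd; ring.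
Qed.

Lemma Z_eff i : (1 <= i <= M)%N -> in_L (Z i) /\ vle (@vzero n) (Z i).
Proof.
case: hNN => _ _ hZ _ _ hi; have [[LZ _ sZ aZ] _] := hZ i hi.
by split => //; exact: antinef_ge0 sZ aZ.
Qed.

Lemma tail_ge0 j : (1 <= j <= M.+1)%N -> vle (@vzero n) (tail j).
Proof.
case: hNN => _ _ _ _ hend /andP [j1 jM] u.
rewrite /tail /vsub /vzero -hend /vsum subr_ge0.
rewrite -!(big_mkord xpredT (fun i => Z i u)).
rewrite (@big_cat_nat _ _ _ j 0 M.+1 _ _ (leq0n j) jM) /= lerDl big_nat.
by apply: sumr_ge0 => i /andP [ji iM]; have [_] := @Z_eff i ltac:(lia); apply.
Qed.

Lemma tail_int j : (1 <= j <= M.+1)%N -> in_L (tail j).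
Proof.
case: hNN => _ hs _ _ _; elim: j => [//|[|j] IH] hj; last first.
  by rewrite tailS; apply: in_LB; [apply: IH; lia | exact: (@Z_eff j.+1 ltac:(lia)).1].
have -> : tail 1 = vsub (@vzero n) (vsub (Z 0%N) ZK).
  apply: functional_extensionality => u.
  by rewrite /tail vsumS /vsub /vadd /vzero /vsum big_ord0; ring.
by apply: in_LB; [move=> u; exists 0 | exact: s_class hs].
Qed.

Lemma tail_supp j : (1 <= j <= M)%N -> B j = supp (tail j).
Proof.
by case: hNN => _ _ _ hstep _; case: j => [//|j] hj; case: (hstep j); first lia.
Qed.

Lemma tail_chi_le0 j : (1 <= j <= M)%N -> chi (tail j) <= 0.
Proof.
case: hNN => _ hs _ _ _; elim: j => [//|[|j] IH] hj.
  have -> : tail 1 = vsub ZK (Z 0%N).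
    apply: functional_extensionality => u.
    by rewrite /tail vsumS /vsub /vadd /vsum big_ord0 add0r.
  by rewrite chi_ZKB //; exact: chi_s_ZK_le0.
have [LZ Z0] := @Z_eff j.+1 ltac:(lia).
have tail_dec : tail j.+1 = vadd (Z j.+1) (tail j.+2).
  by apply: functional_extensionality => u; rewrite (tailS j.+1) /vadd /vsub; ring.
have le_tail : vle (tail j.+2) (tail j.+1).
  by move=> u; rewrite tail_dec /vadd lerDr; exact: Z0.
have Zt : iform adj e (Z j.+1) (tail j.+2) <= 0.
  have t0 : vle (@vzero n) (tail j.+2) by apply: tail_ge0; lia.
  apply: (iform_le0 (B := B j.+1)) => //.
    by rewrite tail_supp; [exact: supp_le | lia].
  by case: hNN => _ _ hZ _ _; case: (hZ j.+1 ltac:(lia)) => -[].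
have := IH ltac:(lia); rewrite tail_dec chiD //.
have := elliptic_chi_ge0 hell LZ Z0; lra.
Qed.

Lemma iform_cycle_E k v : (k < M)%N -> v \notin B k.+1 ->
  iform adj e (EB (B k.+1)) (E v) = 1 ->
  iform adj e (vsum k.+1 Z) (E v) = (e v + 1)%:~R.
Proof.
move=> kM; have hk : (1 <= k.+1 <= M)%N by lia.
have hk' : (1 <= k.+1 <= M.+1)%N by lia.
rewrite tail_supp // => vB hEB.
have := iformE_off_supp adjC hZK hell (tail_int hk') (tail_ge0 hk')
  (tail_chi_le0 hk) vB hEB.
have -> : vsum k.+1 Z = vsub ZK (tail k.+1).
  by apply: functional_extensionality => u; rewrite /tail /vsub; ring.
by rewrite iformBl hZK => ->; rewrite !intrD; lra.
Qed.

End NNEllipticSequence.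

Theorem mainTheorem16 (n : nat) (adj : rel 'I_n) (e : 'I_n -> int) (ZK : vec n)
  (M : nat) (B : nat -> {set 'I_n}) (Z : nat -> vec n) (k : nat) (v : 'I_n) :
  is_tree adj -> neg_def adj e -> is_ZK adj e ZK -> elliptic adj e ZK ->
  NN_seq adj e ZK M B Z ->
  (k < M)%N ->
  v \notin B k.+1 ->
  iform adj e (EB (B k.+1)) (E v) = 1 ->
  iform adj e (vsum k.+1 Z) (E v) = (e v + 1)%:~R.
Proof.
move=> [_ [adjC _]] nd hZK hell hNN; exact: iform_cycle_E.
Qed.
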